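(* Let $L>0$, $N\in\mathbb{N}_+$, $h=L/N$, $\epsilon>0$, $\theta_0>0$, $\tau>0$, $A\ge0$, $\alpha\in(0,1)$, $\rho_u>0$, $\rho_w>0$, and let $u^n,u^{n-1}\in\mathcal{C}_{per}$ with $-1<u^n<1$ and $-1<u^{n-1}<1$ pointwise. Let $u^{n+1}\in\mathcal{C}_{per}$ (with $-1<u^{n+1}<1$ pointwise) be the solution of the second-order convex splitting scheme, i.e. together with some $w^{n+1}\in\mathcal{C}_{per}$, $$3u^{n+1}-4u^n+u^{n-1}=2\tau\Delta_hw^{n+1},$$ $$w^{n+1}=\log(1+u^{n+1})-\log(1-u^{n+1})-\theta_0(2u^n-u^{n-1})-\epsilon^2\Delta_hu^{n+1}-A\tau\theta_0^2\Delta_h(u^{n+1}-u^n).$$ Let $\{u_2^{(k)}\}$ be the sequence generated by Algorithm 2 (described in the context). Then $\lim_{k\to\infty}\|u_2^{(k)}-u^{n+1}\|_2=0$.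
   Context: $\mathcal{C}_{per}$ is the space of real grid functions $\nu=(\nu_{i,j,k})_{i,j,k\in\mathbb{Z}}$ that are $N$-periodic in each index (values at cell centres of a uniform grid of mesh size $h$ on $(0,L)^3$). Inner product $\langle\nu,\xi\rangle=h^2\sum_{i,j,k=1}^N\nu_{i,j,k}\xi_{i,j,k}$, $\|\nu\|_2=\langle\nu,\nu\rangle^{1/2}$. Discrete Laplacian $(\Delta_h\nu)_{i,j,k}=h^{-2}(\nu_{i+1,j,k}+\nu_{i-1,j,k}+\nu_{i,j+1,k}+\nu_{i,j-1,k}+\nu_{i,j,k+1}+\nu_{i,j,k-1}-6\nu_{i,j,k})$. Operations and inequalities are pointwise. The solution $(u^{n+1},w^{n+1})$ of the scheme exists and is unique. Algorithm 2: set $u_2^{(0)}=u^n$, $w_2^{(0)}=0$, $u_3^{(0)}=0$, $w_3^{(0)}=0$. For $k=0,1,2,\dots$: (i) find $u_1^{(k+1)},w_1^{(k+1)}\in\mathcal{C}_{per}$ solving $(-\epsilon^2-A\tau\theta_0^2)\Delta_hu_1^{(k+1)}+A\tau\theta_0^2\Delta_hu^n-\alpha w_1^{(k+1)}+u_3^{(k)}+\rho_u(u_1^{(k+1)}-u_2^{(k)})=0$ and $\alpha(-u_1^{(k+1)}+\frac43u^n-\frac13u^{n-1})+\frac{2\tau}{3}\Delta_hw_1^{(k+1)}-w_3^{(k)}-\rho_w(w_1^{(k+1)}-w_2^{(k)})=0$; (ii) find $u_2^{(k+1)},w_2^{(k+1)}\in\mathcal{C}_{per}$ with $-1<u_2^{(k+1)}<1$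 solving $\log(1+u_2^{(k+1)})-\log(1-u_2^{(k+1)})-\theta_0(2u^n-u^{n-1})-(1-\alpha)w_2^{(k+1)}-u_3^{(k)}-\rho_u(u_1^{(k+1)}-u_2^{(k+1)})=0$ and $(1-\alpha)(-u_2^{(k+1)}+\frac43u^n-\frac13u^{n-1})+w_3^{(k)}+\rho_w(w_1^{(k+1)}-w_2^{(k+1)})=0$; (iii) set $u_3^{(k+1)}=u_3^{(k)}+\rho_u(u_1^{(k+1)}-u_2^{(k+1)})$, $w_3^{(k+1)}=w_3^{(k)}+\rho_w(w_1^{(k+1)}-w_2^{(k+1)})$. *)

From Stdlib Require Import Reals ZArith Lra.
From Coquelicot Require Import Coquelicot.
Open Scope R_scope.

(* Real grid functions indexed by Z^3 (cell centres). *)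
Definition grid := Z -> Z -> Z -> R.

Definition periodic (N : nat) (v : grid) : Prop :=
  forall i j k : Z,
    v (i + Z.of_nat N)%Z j k = v i j k /\
    v i (j + Z.of_nat N)%Z k = v i j k /\
    v i j (k + Z.of_nat N)%Z = v i j k.

Definition lap (h : R) (v : grid) : grid := fun i j k =>
  / (h ^ 2) * (v (i + 1)%Z j k + v (i - 1)%Z j k + v i (j + 1)%Z k
              + v i (j - 1)%Z k + v i j (k + 1)%Z + v i j (k - 1)%Z
              - 6 * v i j k).

(* Sum over i = 1..N of f i  (sum_f_R0 g (N-1) = g 0 + ... + g (N-1)). *)
Definition sum1N (N : nat) (f : Z -> R) : R :=
  sum_f_R0 (fun a => f (Z.of_nat (a + 1))) (N - 1).

Definition ip (N : nat) (h : R) (nu xi : grid) : R :=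
  h ^ 2 * sum1N N (fun i => sum1N N (fun j => sum1N N (fun k =>
            nu i j k * xi i j k))).

Definition norm2 (N : nat) (h : R) (nu : grid) : R := sqrt (ip N h nu nu).

From Stdlib Require Import Reals ZArith Lra Lia.
From Coquelicot Require Import Coquelicot.
Open Scope R_scope.

(* Algorithm 2 is ADMM for the splitting of the implicit step into its quadratic part
   (step (i)) and its logarithmic part phi(u) = ln(1+u) - ln(1-u) (step (ii)). Let
   (ystar, zstar) be the multipliers of the fixed point u1 = u2 = u^{n+1}, w1 = w2 = w^{n+1}.
   Measured from this fixed point, the Lyapunov function
     V_k = |u3 - ystar|^2/(2 rho_u) + |w3 - zstar|^2/(2 rho_w)
           + rho_u |u2 - u^{n+1}|^2/2 + rho_w |w2 - w^{n+1}|^2/2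
   satisfies V_{k+1} + |u2^{(k+1)} - u^{n+1}|^2 <= V_k: the cross terms produced by
   step (i) are nonnegative multiples of <e, Delta_h e>, which is <= 0 by summation by
   parts on the periodic grid, and phi is strongly monotone,
   (phi a - phi b)(a - b) >= (a - b)^2. Hence the errors are summable. *)

Lemma ln_sub_ge (x y : R) : 0 < x -> 0 < y -> (x - y) / x <= ln x - ln y.
Proof.
  intros Hx Hy.
  assert (Hyx : 0 < y / x) by (apply Rdiv_lt_0_compat; lra).
  assert (Hln : ln (y / x) <= y / x - 1).
  { rewrite <- (ln_exp (y / x - 1)). apply ln_le; [exact Hyx|].
    generalize (exp_ineq1_le (y / x - 1)); lra. }
  rewrite ln_div in Hln by lra.
  replace ((x - y) / x) with (- (y / x - 1)) by (field; lra).
  lra.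
Qed.

Definition phi (x : R) : R := ln (1 + x) - ln (1 - x).

Lemma phi_sub_ge (a b : R) : -1 < a < 1 -> -1 < b < 1 -> b <= a -> a - b <= phi a - phi b.
Proof.
  intros Ha Hb Hba. unfold phi.
  assert (H1 := ln_sub_ge (1 + a) (1 + b) ltac:(lra) ltac:(lra)).
  assert (H2 := ln_sub_ge (1 - b) (1 - a) ltac:(lra) ltac:(lra)).
  assert ((a - b) / 2 <= (1 + a - (1 + b)) / (1 + a)).
  { replace (1 + a - (1 + b)) with (a - b) by ring.
    apply Rmult_le_compat_l; [lra|]. apply Rinv_le_contravar; lra. }
  assert ((a - b) / 2 <= (1 - b - (1 - a)) / (1 - b)).
  { replace (1 - b - (1 - a)) with (a - b) by ring.
    apply Rmult_le_compat_l; [lra|]. apply Rinv_le_contravar; lra. }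
  lra.
Qed.

Lemma phi_strongly_monotone (a b : R) : -1 < a < 1 -> -1 < b < 1 ->
  (a - b) * (a - b) <= (phi a - phi b) * (a - b).
Proof.
  intros Ha Hb. destruct (Rle_dec b a) as [Hba | Hab].
  - apply Rmult_le_compat_r; [lra|]. now apply phi_sub_ge.
  - assert (H := phi_sub_ge b a Hb Ha ltac:(lra)).
    replace ((phi a - phi b) * (a - b)) with ((phi b - phi a) * (b - a)) by ring.
    replace ((a - b) * (a - b)) with ((b - a) * (b - a)) by ring.
    apply Rmult_le_compat_r; lra.
Qed.

Lemma sum_f_R0_shift (g : nat -> R) (n : nat) :
  sum_f_R0 (fun a => g (S a)) n = sum_f_R0 g n - g 0%nat + g (S n).
Proof. induction n as [|n IH]; simpl; [|rewrite IH]; ring. Qed.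

Section Sum1N.
Variable N : nat.

Lemma sum1N_ext (f g : Z -> R) : (forall i, f i = g i) -> sum1N N f = sum1N N g.
Proof. intros H; apply sum_eq; intros; apply H. Qed.

Lemma sum1N_le (f g : Z -> R) : (forall i, f i <= g i) -> sum1N N f <= sum1N N g.
Proof. intros H; apply sum_Rle; intros; apply H. Qed.

Lemma sum1N_plus (f g : Z -> R) :
  sum1N N (fun i => f i + g i) = sum1N N f + sum1N N g.
Proof. apply sum_plus. Qed.

Lemma sum1N_scal (c : R) (f : Z -> R) : sum1N N (fun i => c * f i) = c * sum1N N f.
Proof. unfold sum1N; rewrite scal_sum; apply sum_eq; intros; ring. Qed.

Hypothesis HN : (0 < N)%nat.

Lemma sum1N_translate_succ (f : Z -> R) : (forall i, f (i + Z.of_nat N)%Z = f i) ->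
  sum1N N (fun i => f (i + 1)%Z) = sum1N N f.
Proof.
  intros Hf. unfold sum1N.
  rewrite (sum_eq _ (fun a => f (Z.of_nat (S a + 1)))) by (intros; f_equal; lia).
  rewrite (sum_f_R0_shift (fun a => f (Z.of_nat (a + 1)))).
  replace (Z.of_nat (S (N - 1) + 1)) with (Z.of_nat (0 + 1) + Z.of_nat N)%Z by lia.
  rewrite Hf; ring.
Qed.

Lemma sum1N_translate (f : Z -> R) (d : Z) : (forall i, f (i + Z.of_nat N)%Z = f i) ->
  sum1N N (fun i => f (i + d)%Z) = sum1N N f.
Proof.
  intros Hf. induction d as [|d IH|d IH] using Z.peano_ind.
  - apply sum1N_ext; intros i; now rewrite Z.add_0_r.
  - rewrite <- IH, <- (sum1N_translate_succ (fun i => f (i + d)%Z)).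
    + apply sum1N_ext; intros i; f_equal; ring.
    + intros i; rewrite <- (Hf (i + d)%Z); f_equal; ring.
  - rewrite <- IH, <- (sum1N_translate_succ (fun i => f (i + Z.pred d)%Z)).
    + apply sum1N_ext; intros i; f_equal; rewrite <- Z.sub_1_r; ring.
    + intros i; rewrite <- (Hf (i + Z.pred d)%Z); f_equal; ring.
Qed.

End Sum1N.

Definition sum3 (N : nat) (f : grid) : R :=
  sum1N N (fun i => sum1N N (fun j => sum1N N (fun k => f i j k))).

Definition translate (a b c : Z) (v : grid) : grid :=
  fun i j k => v (i + a)%Z (j + b)%Z (k + c)%Z.

Lemma lap_sub (h : R) (f g : grid) (i j k : Z) :
  lap h (fun a b c => f a b c - g a b c) i j k = lap h f i j k - lap h g i j k.
Proof. unfold lap; ring. Qed.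

Lemma periodic_map2 (N : nat) (op : R -> R -> R) (f g : grid) :
  periodic N f -> periodic N g -> periodic N (fun i j k => op (f i j k) (g i j k)).
Proof.
  intros Pf Pg i j k.
  destruct (Pf i j k) as (-> & -> & ->), (Pg i j k) as (-> & -> & ->). tauto.
Qed.

Section Sum3.
Variable N : nat.

Lemma sum3_ext (f g : grid) : (forall i j k, f i j k = g i j k) -> sum3 N f = sum3 N g.
Proof. intros H; do 3 (apply sum1N_ext; intros); apply H. Qed.

Lemma sum3_le (f g : grid) : (forall i j k, f i j k <= g i j k) -> sum3 N f <= sum3 N g.
Proof. intros H; do 3 (apply sum1N_le; intros); apply H. Qed.

Lemma sum3_plus (f g : grid) :
  sum3 N (fun i j k => f i j k + g i j k) = sum3 N f + sum3 N g.
Proof.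
  unfold sum3; rewrite <- sum1N_plus; apply sum1N_ext; intros i.
  rewrite <- sum1N_plus; apply sum1N_ext; intros j. apply sum1N_plus.
Qed.

Lemma sum3_scal (c : R) (f : grid) : sum3 N (fun i j k => c * f i j k) = c * sum3 N f.
Proof.
  unfold sum3; rewrite <- sum1N_scal; apply sum1N_ext; intros i.
  rewrite <- sum1N_scal; apply sum1N_ext; intros j. apply sum1N_scal.
Qed.

Lemma sum3_minus (f g : grid) :
  sum3 N (fun i j k => f i j k - g i j k) = sum3 N f - sum3 N g.
Proof.
  rewrite (sum3_ext _ (fun i j k => f i j k + -1 * g i j k)) by (intros; ring).
  rewrite sum3_plus, sum3_scal; ring.
Qed.

Lemma sum3_nonneg (f : grid) : (forall i j k, 0 <= f i j k) -> 0 <= sum3 N f.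
Proof.
  intros Hf. rewrite <- (Rmult_0_l (sum3 N (fun _ _ _ => 0))), <- sum3_scal.
  apply sum3_le; intros; rewrite Rmult_0_l; apply Hf.
Qed.

Hypothesis HN : (0 < N)%nat.

Lemma sum3_translate (a b c : Z) (v : grid) : periodic N v ->
  sum3 N (translate a b c v) = sum3 N v.
Proof.
  intros Pv. unfold sum3, translate.
  rewrite <- (sum1N_translate N HN (fun i => sum1N N (fun j => sum1N N (fun k => v i j k))) a)
    by (intros i; do 2 (apply sum1N_ext; intros); apply Pv).
  apply sum1N_ext; intros i.
  rewrite <- (sum1N_translate N HN (fun j => sum1N N (fun k => v (i + a)%Z j k)) b)
    by (intros j; apply sum1N_ext; intros; apply Pv).
  apply sum1N_ext; intros j.
  rewrite <- (sum1N_translate N HN (fun k => v (i + a)%Z (j + b)%Z k) c) by (intros; apply Pv).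
  reflexivity.
Qed.

Lemma sum3_translate_sub (a b c : Z) (v : grid) : periodic N v ->
  sum3 N (fun i j k => translate a b c v i j k - v i j k) = 0.
Proof. intros Pv; rewrite sum3_minus, sum3_translate by exact Pv; ring. Qed.

(* v (w - v) = (w^2 - v^2)/2 - (w - v)^2/2, and w^2 - v^2 sums to 0 over a period
   when w is a translate of v. *)
Lemma sum3_mul_lap_nonpos (h : R) (v : grid) : periodic N v ->
  sum3 N (fun i j k => v i j k * lap h v i j k) <= 0.
Proof.
  intros Pv.
  set (q := fun i j k => v i j k * v i j k).
  assert (Pq : periodic N q) by (apply periodic_map2; exact Pv).
  assert (Ht : 0 <= / h ^ 2).
  { destruct (Req_dec h 0) as [-> | Hh].
    - rewrite pow_i, Rinv_0 by lia; lra.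
    - apply Rlt_le, Rinv_0_lt_compat, pow2_gt_0, Hh. }
  apply Rle_trans with (sum3 N (fun i j k => / h ^ 2 / 2 *
    ((translate 1 0 0 q i j k - q i j k) + (translate (-1) 0 0 q i j k - q i j k)
     + (translate 0 1 0 q i j k - q i j k) + (translate 0 (-1) 0 q i j k - q i j k)
     + (translate 0 0 1 q i j k - q i j k) + (translate 0 0 (-1) q i j k - q i j k)))).
  - apply sum3_le; intros i j k. unfold lap, translate, q. rewrite !Z.add_0_r.
    replace (i + -1)%Z with (i - 1)%Z by ring.
    replace (j + -1)%Z with (j - 1)%Z by ring.
    replace (k + -1)%Z with (k - 1)%Z by ring.
    assert (Hsq : 0 <= / h ^ 2 / 2 *
      ((v (i + 1)%Z j k - v i j k) ^ 2 + (v (i - 1)%Z j k - v i j k) ^ 2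
       + (v i (j + 1)%Z k - v i j k) ^ 2 + (v i (j - 1)%Z k - v i j k) ^ 2
       + (v i j (k + 1)%Z - v i j k) ^ 2 + (v i j (k - 1)%Z - v i j k) ^ 2)).
    { apply Rmult_le_pos; [lra|].
      repeat apply Rplus_le_le_0_compat; apply pow2_ge_0. }
    lra.
  - rewrite sum3_scal, !sum3_plus, !sum3_translate_sub by exact Pq. lra.
Qed.

End Sum3.

Lemma is_lim_seq_dissipation (V E : nat -> R) :
  (forall p, 0 <= V p) -> (forall p, 0 <= E p) ->
  (forall p, V (S p) + E (S p) <= V p) -> is_lim_seq E 0.
Proof.
  intros HV HE Hdec.
  destruct (ex_finite_lim_seq_decr V 0) as [l Hl].
  { intros p; generalize (Hdec p) (HE (S p)); lra. }
  { exact HV. }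
  apply is_lim_seq_incr_1.
  apply is_lim_seq_le_le with (u := fun _ => 0) (w := fun p => V p - V (S p)).
  - intros p; split; [apply HE|]. generalize (Hdec p); lra.
  - apply is_lim_seq_const.
  - replace 0 with (l - l) by ring.
    apply is_lim_seq_minus'; [exact Hl|]. now apply is_lim_seq_incr_1 in Hl.
Qed.

Lemma is_lim_seq_norm2 (N : nat) (h : R) (e : nat -> grid) :
  is_lim_seq (fun m => sum3 N (fun i j k => e m i j k * e m i j k)) 0 ->
  is_lim_seq (fun m => norm2 N h (e m)) 0.
Proof.
  intros He. rewrite <- sqrt_0.
  apply (is_lim_seq_continuous sqrt (fun m => ip N h (e m) (e m)) 0).
  - apply continuity_pt_sqrt, Rle_refl.
  - replace 0 with (h ^ 2 * 0) by ring.
    now apply (is_lim_seq_scal_l _ (h ^ 2) 0).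
Qed.

Definition admm_energy (ru rw y z u w : R) : R :=
  y * y / (2 * ru) + z * z / (2 * rw) + ru * (u * u) / 2 + rw * (w * w) / 2.

Lemma admm_energy_nonneg (ru rw y z u w : R) : 0 < ru -> 0 < rw ->
  0 <= admm_energy ru rw y z u w.
Proof.
  intros Hru Hrw. unfold admm_energy.
  assert (0 <= / (2 * ru)) by (apply Rlt_le, Rinv_0_lt_compat; lra).
  assert (0 <= / (2 * rw)) by (apply Rlt_le, Rinv_0_lt_compat; lra).
  assert (0 <= y * y) by apply Rle_0_sqr.
  assert (0 <= z * z) by apply Rle_0_sqr.
  assert (0 <= u * u) by apply Rle_0_sqr.
  assert (0 <= w * w) by apply Rle_0_sqr.
  unfold Rdiv. repeat apply Rplus_le_le_0_compat; apply Rmult_le_pos; nra.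
Qed.

(* One iteration in error variables: unprimed quantities belong to iterate m, primed ones
   to iterate m+1, p stands for phi(u2) - phi(u^{n+1}), and lu1, lw1 for the
   Laplacian terms of step (i). *)
Lemma admm_energy_step (al ru rw u1 w1 lu1 lw1 u2 w2 u2' w2' y z y' z' p p' : R) :
  0 < ru -> 0 < rw ->
  lu1 = - al * w1 + y + ru * (u1 - u2) ->
  lw1 = al * u1 + z + rw * (w1 - w2) ->
  y' = y + ru * (u1 - u2') -> z' = z + rw * (w1 - w2') ->
  y = p - (1 - al) * w2 -> z = (1 - al) * u2 ->
  y' = p' - (1 - al) * w2' -> z' = (1 - al) * u2' ->
  u2' * u2' <= p' * u2' -> 0 <= (p' - p) * (u2' - u2) ->
  admm_energy ru rw y' z' u2' w2' + u2' * u2'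
  <= admm_energy ru rw y z u2 w2 + u1 * lu1 + w1 * lw1.
Proof.
  intros Hru Hrw -> -> Hy' Hz' Hy Hz Hp'y Hp'z Hmono Hmono'.
  assert (Hu1 : u1 = u2' + (y' - y) / ru) by (rewrite Hy'; field; lra).
  assert (Hw1 : w1 = w2' + (z' - z) / rw) by (rewrite Hz'; field; lra).
  assert (Hdecay : admm_energy ru rw y z u2 w2
      + u1 * (- al * w1 + y + ru * (u1 - u2)) + w1 * (al * u1 + z + rw * (w1 - w2))
      - (admm_energy ru rw y' z' u2' w2' + u2' * u2')
    = (p' * u2' - u2' * u2') + (p' - p) * (u2' - u2)
      + admm_energy ru rw (y' - y) (z' - z) (u2' - u2) (w2' - w2)).
  { unfold admm_energy. rewrite Hu1, Hw1, Hy, Hz, Hp'y, Hp'z. field; lra. }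
  generalize (admm_energy_nonneg ru rw (y' - y) (z' - z) (u2' - u2) (w2' - w2) Hru Hrw).
  lra.
Qed.

Section Algorithm2.
Variables (N : nat) (h eps theta0 tau A alpha rho_u rho_w : R).
Variables (un unm1 unp1 wnp1 : grid) (u1 w1 u2 w2 u3 w3 : nat -> grid).
Hypotheses (HN : (0 < N)%nat) (Htau : 0 <= tau) (HA : 0 <= A)
  (Hru : 0 < rho_u) (Hrw : 0 < rho_w).
Hypotheses (Punp1 : periodic N unp1) (Pwnp1 : periodic N wnp1)
  (Pu1 : forall m, periodic N (u1 m)) (Pw1 : forall m, periodic N (w1 m)).
Hypotheses (Bunp1 : forall i j k, -1 < unp1 i j k < 1)
  (Bu2 : forall m i j k, -1 < u2 (S m) i j k < 1).
Hypothesis scheme_u : forall i j k,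
  3 * unp1 i j k - 4 * un i j k + unm1 i j k = 2 * tau * lap h wnp1 i j k.
Hypothesis scheme_w : forall i j k,
  wnp1 i j k = phi (unp1 i j k) - theta0 * (2 * un i j k - unm1 i j k)
               - eps ^ 2 * lap h unp1 i j k
               - A * tau * theta0 ^ 2 * lap h (fun a b c => unp1 a b c - un a b c) i j k.
Hypothesis step_i_u : forall m i j k,
  (- eps ^ 2 - A * tau * theta0 ^ 2) * lap h (u1 (S m)) i j k
  + A * tau * theta0 ^ 2 * lap h un i j k
  - alpha * w1 (S m) i j k + u3 m i j k + rho_u * (u1 (S m) i j k - u2 m i j k) = 0.
Hypothesis step_i_w : forall m i j k,
  alpha * (- u1 (S m) i j k + 4 / 3 * un i j k - 1 / 3 * unm1 i j k)
  + 2 * tau / 3 * lap h (w1 (S m)) i j k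
  - w3 m i j k - rho_w * (w1 (S m) i j k - w2 m i j k) = 0.
Hypothesis step_ii_u : forall m i j k,
  phi (u2 (S m) i j k) - theta0 * (2 * un i j k - unm1 i j k)
  - (1 - alpha) * w2 (S m) i j k - u3 m i j k
  - rho_u * (u1 (S m) i j k - u2 (S m) i j k) = 0.
Hypothesis step_ii_w : forall m i j k,
  (1 - alpha) * (- u2 (S m) i j k + 4 / 3 * un i j k - 1 / 3 * unm1 i j k)
  + w3 m i j k + rho_w * (w1 (S m) i j k - w2 (S m) i j k) = 0.
Hypothesis step_iii_u : forall m i j k,
  u3 (S m) i j k = u3 m i j k + rho_u * (u1 (S m) i j k - u2 (S m) i j k).
Hypothesis step_iii_w : forall m i j k,
  w3 (S m) i j k = w3 m i j k + rho_w * (w1 (S m) i j k - w2 (S m) i j k).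

Let kappa : R := eps ^ 2 + A * tau * theta0 ^ 2.

Let hist : grid := fun i j k => 4 / 3 * un i j k - 1 / 3 * unm1 i j k.

Let ystar : grid := fun i j k =>
  phi (unp1 i j k) - theta0 * (2 * un i j k - unm1 i j k) - (1 - alpha) * wnp1 i j k.

Let zstar : grid := fun i j k => (1 - alpha) * (unp1 i j k - hist i j k).

Let lyapunov (m : nat) : R := sum3 N (fun i j k =>
  admm_energy rho_u rho_w (u3 m i j k - ystar i j k) (w3 m i j k - zstar i j k)
    (u2 m i j k - unp1 i j k) (w2 m i j k - wnp1 i j k)).

Let err (m : nat) : R :=
  sum3 N (fun i j k => (u2 m i j k - unp1 i j k) * (u2 m i j k - unp1 i j k)).

(* Not true for m = 0 (u3 0 = 0), which is why the Lyapunov decrease starts at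
   the first iterate. *)
Lemma u3_succ (m : nat) (i j k : Z) : u3 (S m) i j k =
  phi (u2 (S m) i j k) - theta0 * (2 * un i j k - unm1 i j k) - (1 - alpha) * w2 (S m) i j k.
Proof. rewrite step_iii_u. generalize (step_ii_u m i j k); lra. Qed.

Lemma w3_succ (m : nat) (i j k : Z) : w3 (S m) i j k = (1 - alpha) * (u2 (S m) i j k - hist i j k).
Proof. rewrite step_iii_w. generalize (step_ii_w m i j k); unfold hist; lra. Qed.

Lemma lyapunov_density_step (m : nat) (i j k : Z) :
  let eu1 := fun a b c => u1 (S (S m)) a b c - unp1 a b c in
  let ew1 := fun a b c => w1 (S (S m)) a b c - wnp1 a b c in
  admm_energy rho_u rho_w (u3 (S (S m)) i j k - ystar i j k) (w3 (S (S m)) i j k - zstar i j k)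
    (u2 (S (S m)) i j k - unp1 i j k) (w2 (S (S m)) i j k - wnp1 i j k)
  + (u2 (S (S m)) i j k - unp1 i j k) * (u2 (S (S m)) i j k - unp1 i j k)
  <= admm_energy rho_u rho_w (u3 (S m) i j k - ystar i j k) (w3 (S m) i j k - zstar i j k)
       (u2 (S m) i j k - unp1 i j k) (w2 (S m) i j k - wnp1 i j k)
     + kappa * (eu1 i j k * lap h eu1 i j k) + 2 * tau / 3 * (ew1 i j k * lap h ew1 i j k).
Proof.
  intros eu1 ew1.
  replace (kappa * _) with (eu1 i j k * (kappa * lap h eu1 i j k)) by ring.
  replace (2 * tau / 3 * _) with (ew1 i j k * (2 * tau / 3 * lap h ew1 i j k)) by ring.
  unfold eu1, ew1. rewrite !lap_sub.
  apply admm_energy_step with (al := alpha)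
    (p := phi (u2 (S m) i j k) - phi (unp1 i j k))
    (p' := phi (u2 (S (S m)) i j k) - phi (unp1 i j k)); auto.
  - generalize (step_i_u (S m) i j k) (scheme_w i j k). rewrite lap_sub.
    unfold ystar, kappa, phi. lra.
  - generalize (step_i_w (S m) i j k) (scheme_u i j k). unfold zstar, hist. lra.
  - rewrite step_iii_u; ring.
  - rewrite step_iii_w; ring.
  - rewrite u3_succ; unfold ystar; ring.
  - rewrite w3_succ; unfold zstar; ring.
  - rewrite u3_succ; unfold ystar; ring.
  - rewrite w3_succ; unfold zstar; ring.
  - apply phi_strongly_monotone; auto.
  - replace (_ * _) with ((phi (u2 (S (S m)) i j k) - phi (u2 (S m) i j k))
                         * (u2 (S (S m)) i j k - u2 (S m) i j k)) by ring.
    eapply Rle_trans; [apply Rle_0_sqr | apply phi_strongly_monotone; auto].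
Qed.

Lemma lyapunov_step (m : nat) : lyapunov (S (S m)) + err (S (S m)) <= lyapunov (S m).
Proof.
  assert (Hkappa : 0 <= kappa).
  { apply Rplus_le_le_0_compat; [apply pow2_ge_0|].
    apply Rmult_le_pos; [apply Rmult_le_pos; lra | apply pow2_ge_0]. }
  assert (Hu := sum3_mul_lap_nonpos N HN h _ (periodic_map2 N Rminus _ _ (Pu1 (S (S m))) Punp1)).
  assert (Hw := sum3_mul_lap_nonpos N HN h _ (periodic_map2 N Rminus _ _ (Pw1 (S (S m))) Pwnp1)).
  cbv beta in Hu, Hw.
  unfold lyapunov, err. rewrite <- sum3_plus.
  eapply Rle_trans; [apply sum3_le; intros i j k; apply lyapunov_density_step|].
  rewrite !sum3_plus, !sum3_scal. nra.
Qed.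

Lemma algorithm2_u2_converges :
  is_lim_seq (fun m => norm2 N h (fun a b c => u2 m a b c - unp1 a b c)) 0.
Proof.
  apply is_lim_seq_norm2, is_lim_seq_incr_1.
  apply (is_lim_seq_dissipation (fun p => lyapunov (S p))).
  - intros p; apply sum3_nonneg; intros; apply admm_energy_nonneg; auto.
  - intros p; apply sum3_nonneg; intros; apply Rle_0_sqr.
  - exact lyapunov_step.
Qed.

End Algorithm2.

Theorem theorem4p6
  (L : R) (N : nat) (eps theta0 tau A alpha rho_u rho_w : R)
  (un unm1 unp1 wnp1 : grid)
  (u1 w1 u2 w2 u3 w3 : nat -> grid) :
  let h := L / INR N in
  0 < L -> (0 < N)%nat -> 0 < eps -> 0 < theta0 -> 0 < tau -> 0 <= A ->
  0 < alpha < 1 -> 0 < rho_u -> 0 < rho_w ->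
  periodic N un -> periodic N unm1 -> periodic N unp1 -> periodic N wnp1 ->
  (forall i j k, -1 < un i j k < 1) ->
  (forall i j k, -1 < unm1 i j k < 1) ->
  (forall i j k, -1 < unp1 i j k < 1) ->
  (* the second-order convex splitting scheme *)
  (forall i j k,
     3 * unp1 i j k - 4 * un i j k + unm1 i j k = 2 * tau * lap h wnp1 i j k) ->
  (forall i j k,
     wnp1 i j k = ln (1 + unp1 i j k) - ln (1 - unp1 i j k)
                  - theta0 * (2 * un i j k - unm1 i j k)
                  - eps ^ 2 * lap h unp1 i j k
                  - A * tau * theta0 ^ 2 * lap h (fun a b c => unp1 a b c - un a b c) i j k) ->
  (* Algorithm 2: all iterates lie in C_per *)
  (forall m, periodic N (u1 m) /\ periodic N (w1 m) /\ periodic N (u2 m) /\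
             periodic N (w2 m) /\ periodic N (u3 m) /\ periodic N (w3 m)) ->
  (* initialization *)
  u2 0%nat = un -> w2 0%nat = (fun _ _ _ => 0) ->
  u3 0%nat = (fun _ _ _ => 0) -> w3 0%nat = (fun _ _ _ => 0) ->
  (* step (i) *)
  (forall m i j k,
     (- eps ^ 2 - A * tau * theta0 ^ 2) * lap h (u1 (S m)) i j k
     + A * tau * theta0 ^ 2 * lap h un i j k
     - alpha * w1 (S m) i j k + u3 m i j k
     + rho_u * (u1 (S m) i j k - u2 m i j k) = 0) ->
  (forall m i j k,
     alpha * (- u1 (S m) i j k + 4 / 3 * un i j k - 1 / 3 * unm1 i j k)
     + 2 * tau / 3 * lap h (w1 (S m)) i j k
     - w3 m i j k - rho_w * (w1 (S m) i j k - w2 m i j k) = 0) ->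
  (* step (ii) *)
  (forall m i j k, -1 < u2 (S m) i j k < 1) ->
  (forall m i j k,
     ln (1 + u2 (S m) i j k) - ln (1 - u2 (S m) i j k)
     - theta0 * (2 * un i j k - unm1 i j k)
     - (1 - alpha) * w2 (S m) i j k - u3 m i j k
     - rho_u * (u1 (S m) i j k - u2 (S m) i j k) = 0) ->
  (forall m i j k,
     (1 - alpha) * (- u2 (S m) i j k + 4 / 3 * un i j k - 1 / 3 * unm1 i j k)
     + w3 m i j k + rho_w * (w1 (S m) i j k - w2 (S m) i j k) = 0) ->
  (* step (iii) *)
  (forall m i j k,
     u3 (S m) i j k = u3 m i j k + rho_u * (u1 (S m) i j k - u2 (S m) i j k)) ->
  (forall m i j k,
     w3 (S m) i j k = w3 m i j k + rho_w * (w1 (S m) i j k - w2 (S m) i j k)) ->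
  is_lim_seq (fun m => norm2 N h (fun a b c => u2 m a b c - unp1 a b c)) 0.
Proof.
  intros h _ HN _ _ Htau HA _ Hru Hrw _ _ Punp1 Pwnp1 _ _ Bunp1 scheme_u scheme_w Per
    _ _ _ _ step_i_u step_i_w Bu2 step_ii_u step_ii_w step_iii_u step_iii_w.
  apply (algorithm2_u2_converges N h eps theta0 tau A alpha rho_u rho_w un unm1 unp1 wnp1
           u1 w1 u2 w2 u3 w3); auto.
  - now apply Rlt_le.
  - intros m; apply Per.
  - intros m; apply Per.
Qed.
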